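(* Let $(F_n)_{n\ge0}$ be the Fibonacci sequence ($F_0=0$, $F_1=1$, $F_{n+2}=F_{n+1}+F_n$) and $\Phi=(1+\sqrt5)/2$. Let $c,d$ be fixed positive integers. Then for all positive integers $n,m$ with $n\geq 2$ and $m\leq\lfloor (n+1)/2\rfloor+1$, \[\mathrm{lcm}\left(cF_m+dF_{m-1},\,cF_{m+1}+dF_m,\,\dots,\,cF_n+dF_{n-1}\right)\geq \gcd(c,d)\left(\frac{c\Phi+d}{\Phi\gcd(c,d)}\right)^{\frac{n-1}{2}}\Phi^{\frac{n^2}{4}-\frac{n}{2}-\frac{7}{4}}.\] *)

From Stdlib Require Import Reals Arith List.
Import ListNotations.
Open Scope R_scope.

Fixpoint fib (n : nat) : nat :=
  match n with
  | O => O
  | S n' => match n' with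
            | O => 1%nat
            | S n'' => (fib n' + fib n'')%nat
            end
  end.

Definition Phi : R := (1 + sqrt 5) / 2.

(* The generalized term c F_k + d F_{k-1} (used for k >= 1). *)
Definition G (c d k : nat) : nat := (c * fib k + d * fib (k - 1))%nat.

Definition lcm_list (l : list nat) : nat := fold_right Nat.lcm 1%nat l.

Definition lcm_range (c d m n : nat) : nat :=
  lcm_list (map (G c d) (seq m (S n - m))).

(* The shifted sequence (G_(k+1)) satisfies the Fibonacci
   recurrence, so G_(a+k+1) = F_(k+1) G_(a+1) + F_k G_a and gcd(G_a, G_b) divides
   gcd(c, d) F_(b-a).
   If x_0, ..., x_N all divide L and gcd(x_i, x_j) divides f(j - i), then x_0 ... x_N divides
   L f(1) ... f(N): for a prime p and a level e <= v_p(L), any two indices i < j with p^e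
   dividing x_i and x_j give p^e | f(j - i), so there are at most 1 + #{s | p^e | f(s)} such
   indices, and summing over e compares the p-adic valuations.
   Applied to G_(j+2), ..., G_n with j = (n - 1)/2, this bounds the lcm below by
   prod G_(j+2+i) / prod gcd(c, d) F_s, and Phi^(k-2) <= F_k <= Phi^(k-1) turns the quotient
   into an exponential whose exponent dominates the one in the statement. *)

From Stdlib Require Import Reals Arith List Lia Lra.
From mathcomp Require Import ssreflect ssrfun ssrbool.
Open Scope R_scope.

(* A module, so that the boolean comparisons of ssrnat do not change the reading of the
   [%nat] comparisons in the statement of corollary1. *)
Module LcmBound.
From mathcomp Require Import eqtype ssrnat div fintype bigop prime zify.
Local Open Scope nat_scope.

(** * Valuations of products *)

Lemma sum_ltn_minn a M : \sum_(e < M) (e < a) = minn a M.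
Proof.
elim: M => [|M IH]; first by rewrite big_ord0; lia.
by rewrite big_ord_recr /= IH; case: ltnP => /=; lia.
Qed.

Lemma sum_le_gaps N (P Q : nat -> bool) :
  (forall i j, i < j <= N -> P i -> P j -> Q (j - i)) ->
  \sum_(i < N.+1) P i <= 1 + \sum_(s < N) Q s.+1.
Proof.
elim: N P => [|N IH] P PQ; first by rewrite big_ord_recr big_ord0 /=; case: (P 0).
rewrite big_ord_recl /=; case P0: (P 0) => /=.
  rewrite add1n ltnS; apply: leq_sum => i _.
  case Pi: (P (bump 0 i)) => //=.
  by have := PQ 0 (bump 0 i); rewrite /bump /= subn0 add1n ltn_ord P0 Pi => ->.
have -> : \sum_(i < N.+1) P (bump 0 i) = \sum_(i < N.+1) P i.+1.
  by apply: eq_bigr => i _; rewrite /bump /= add1n.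
apply: leq_trans (IH (fun i => P i.+1) _) _.
  by move=> i j ij; have := PQ i.+1 j.+1; rewrite subSS; apply.
by rewrite leq_add2l [X in _ <= X]big_ord_recr leq_addr.
Qed.

Lemma sum_le_add_sum_gaps N M (a b : nat -> nat) :
  (forall i, i <= N -> a i <= M) ->
  (forall i j, i < j <= N -> minn (a i) (a j) <= b (j - i)) ->
  \sum_(i < N.+1) a i <= M + \sum_(s < N) b s.+1.
Proof.
move=> aM ab.
have -> : \sum_(i < N.+1) a i = \sum_(e < M) \sum_(i < N.+1) (e < a i).
  rewrite exchange_big; apply: eq_bigr => i _.
  by rewrite sum_ltn_minn; have := aM i (ltn_ord i); lia.
have levels : \sum_(e < M) \sum_(i < N.+1) (e < a i)
               <= \sum_(e < M) (1 + \sum_(s < N) (e < b s.+1)).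
  apply: leq_sum => e _.
  apply: (@sum_le_gaps N (fun i => e < a i) (fun s => e < b s)) => i j ij ei ej.
  by have := ab i j ij; lia.
apply: leq_trans levels _.
rewrite big_split sum_nat_const card_ord muln1 leq_add2l exchange_big.
by apply: leq_sum => s _; rewrite sum_ltn_minn geq_minl.
Qed.

Lemma logn_prod p n (x : nat -> nat) : (forall i, i < n -> 0 < x i) ->
  logn p (\prod_(i < n) x i) = \sum_(i < n) logn p (x i).
Proof.
elim: n => [|n IH] x_gt0; first by rewrite !big_ord0 logn1.
rewrite !big_ord_recr lognM ?IH ?x_gt0 //; first by move=> i /ltnW; apply: x_gt0.
by rewrite prodn_gt0 // => i; rewrite x_gt0 // ltnW.
Qed.

Lemma dvdn_logn a b : 0 < a -> 0 < b ->
  (forall p, prime p -> logn p a <= logn p b) -> a %| b.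
Proof.
move=> a_gt0 b_gt0 ab; apply/dvdn_partP => // p; rewrite mem_primes => /andP[p_pr _].
by rewrite p_part pfactor_dvdn // ab.
Qed.

Lemma prod_dvdn_mul_prod_gaps N L (x f : nat -> nat) :
  0 < L -> (forall i, i <= N -> 0 < x i) -> (forall i, i <= N -> x i %| L) ->
  (forall s, 0 < s <= N -> 0 < f s) ->
  (forall i j, i < j <= N -> gcdn (x i) (x j) %| f (j - i)) ->
  \prod_(i < N.+1) x i %| L * \prod_(s < N) f s.+1.
Proof.
move=> L_gt0 x_gt0 xL f_gt0 xf.
have fprod_gt0 : 0 < \prod_(s < N) f s.+1.
  by rewrite prodn_gt0 // => s; rewrite f_gt0 // ltn_ord.
apply: dvdn_logn; first by rewrite prodn_gt0 // => i; rewrite x_gt0 // -ltnS.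
  by rewrite muln_gt0 L_gt0.
move=> p p_pr; rewrite lognM // logn_prod => [|i]; last by rewrite ltnS; apply: x_gt0.
rewrite (logn_prod p N (fun s => f s.+1)) => [|s sN]; last by apply: f_gt0.
apply: (@sum_le_add_sum_gaps N _ (fun i => logn p (x i)) (fun s => logn p (f s)))
  => [i iN | i j ijN]; first by rewrite dvdn_leq_log ?xL.
rewrite -logn_gcd ?x_gt0 //; try lia.
by rewrite dvdn_leq_log ?xf ?f_gt0 //; lia.
Qed.

(** * Fibonacci-like sequences *)

Lemma fibSS k : fib k.+2 = fib k.+1 + fib k.
Proof. by []. Qed.

Lemma fib_gt0 k : 0 < k -> 0 < fib k.
Proof. by elim/ltn_ind: k => -[|[|k]] // IH _; rewrite fibSS addn_gt0 IH. Qed.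

Section FibonacciLike.
Variable u : nat -> nat.
Hypothesis uSS : forall k, u k.+2 = u k.+1 + u k.

Lemma fibonacci_like_addS a k : u (a + k.+1) = fib k.+1 * u a.+1 + fib k * u a.
Proof.
elim: k a => [|k IH] a; first by rewrite addn1 /=; lia.
rewrite -addSnnS IH uSS /=; lia.
Qed.

Lemma gcdn_fibonacci_like_succ a : gcdn (u a) (u a.+1) = gcdn (u 0) (u 1).
Proof. by elim: a => [|a IH] //; rewrite uSS gcdnDl gcdnC. Qed.

Lemma gcdn_fibonacci_like_dvdn a k :
  gcdn (u a) (u (a + k)) %| gcdn (u 0) (u 1) * fib k.
Proof.
case: k => [|k]; first by rewrite muln0 dvdn0.
set q := gcdn (u a) (u (a + k.+1)).
have qa : q %| u a := dvdn_gcdl _ _.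
have qa1 : q %| fib k.+1 * u a.+1.
  by rewrite -(dvdn_addl _ (dvdn_mull (fib k) qa)) -fibonacci_like_addS dvdn_gcdr.
have : q %| gcdn (fib k.+1 * u a.+1) (fib k.+1 * u a) by rewrite dvdn_gcd qa1 dvdn_mull.
by rewrite -muln_gcdr gcdnC gcdn_fibonacci_like_succ mulnC.
Qed.

End FibonacciLike.

Section GeneralizedFibonacci.
Variables c d : nat.

(* G c d 0 = 0 (the index k - 1 is truncated), so the recurrence only holds from k = 1 on. *)
Lemma G_SSS k : G c d k.+3 = G c d k.+2 + G c d k.+1.
Proof. by rewrite /G !Nat.sub_succ !Nat.sub_0_r !fibSS; lia. Qed.

Lemma G_gt0 k : 0 < c -> 0 < k -> 0 < G c d k.
Proof. by move=> c_gt0 /fib_gt0; rewrite /G; nia. Qed.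

Lemma gcdn_G_dvdn a b : 0 < a <= b -> gcdn (G c d a) (G c d b) %| gcdn c d * fib (b - a).
Proof.
case: a => [|a] // /= ab; have [k ->] : exists k, b = a.+1 + k by exists (b - a.+1); lia.
have := gcdn_fibonacci_like_dvdn (fun k => G c d k.+1) G_SSS a k.
have -> : G c d 1 = c by rewrite /G /=; lia.
have -> : G c d 2 = c + d by rewrite /G /=; lia.
by rewrite gcdnDl addKn addSn.
Qed.

End GeneralizedFibonacci.

(** * The lcm of consecutive terms *)

Lemma divideP a b : reflect (Nat.divide a b) (a %| b).
Proof. by apply: (iffP dvdnP) => -[k ->]; exists k. Qed.

Lemma dvdn_lcm_list l x : List.In x l -> x %| lcm_list l.
Proof.
elim: l => [|y l IH] //= [<-|/IH /divideP xl]; apply/divideP.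
  exact: Nat.divide_lcm_l.
exact: Nat.divide_trans xl (Nat.divide_lcm_r _ _).
Qed.

Lemma lcm_list_gt0 l : (forall x, List.In x l -> 0 < x) -> 0 < lcm_list l.
Proof.
elim: l => [|y l IH] l_gt0 //=; rewrite lt0n; apply/eqP => /Nat.lcm_eq_0.
have := l_gt0 y (or_introl erefl); have := IH (fun x lx => l_gt0 x (or_intror lx)).
lia.
Qed.

Lemma G_dvdn_lcm_range c d m n k : m <= k <= n -> G c d k %| lcm_range c d m n.
Proof. by move=> mkn; apply/dvdn_lcm_list/List.in_map/List.in_seq; lia. Qed.

Lemma lcm_range_gt0 c d m n : 0 < c -> 0 < m -> 0 < lcm_range c d m n.
Proof.
move=> c_gt0 m_gt0; apply: lcm_list_gt0 => _ /List.in_map_iff[k [<- /List.in_seq mk]].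
by apply: G_gt0; lia.
Qed.

Lemma Nat_gcdE a b : Nat.gcd a b = gcdn a b.
Proof.
apply: Nat.gcd_unique => [||q /divideP qa /divideP qb]; apply/divideP.
- exact: dvdn_gcdl.
- exact: dvdn_gcdr.
by rewrite dvdn_gcd qa qb.
Qed.

Lemma prod_G_le_lcm_range c d m m0 N : 0 < c -> 0 < m -> m <= m0 ->
  \prod_(i < N.+1) G c d (m0 + i)
    <= lcm_range c d m (m0 + N) * \prod_(s < N) (Nat.gcd c d * fib s.+1).
Proof.
move=> c_gt0 m_gt0 mm0; rewrite Nat_gcdE.
have L_gt0 := @lcm_range_gt0 c d m (m0 + N) c_gt0 m_gt0.
apply: dvdn_leq.
  by rewrite muln_gt0 L_gt0 prodn_gt0 // => s; rewrite muln_gt0 gcdn_gt0 c_gt0 fib_gt0.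
apply: (@prod_dvdn_mul_prod_gaps N _ (fun i => G c d (m0 + i)) (fun s => gcdn c d * fib s))
  => // [i iN | i iN | s sN | i j ijN].
- by apply: G_gt0; lia.
- by apply: G_dvdn_lcm_range; lia.
- by case/andP: sN => s_gt0 _; rewrite muln_gt0 gcdn_gt0 c_gt0 fib_gt0.
have -> : j - i = m0 + j - (m0 + i) by lia.
by apply: gcdn_G_dvdn; lia.
Qed.

Local Open Scope R_scope.

(** * Estimates in powers of Phi *)

Lemma Phi_gt1 : 1 < Phi.
Proof.
have := sqrt_lt_R0 5; have := sqrt_sqrt 5.
rewrite /Phi; nra.
Qed.

Lemma Phi_pow_SS k : Phi ^ k.+2 = Phi ^ k.+1 + Phi ^ k.
Proof.
have Phi2 : Phi * Phi = Phi + 1 by have := sqrt_sqrt 5; rewrite /Phi; nra.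
by rewrite /= -Rmult_assoc Phi2; ring.
Qed.

Lemma INR_fibSS k : INR (fib k.+2) = INR (fib k.+1) + INR (fib k).
Proof. by rewrite fibSS plus_INR. Qed.

Lemma fibonacci_like_Rle (a b : nat -> R) :
  (forall k, a k.+2 = a k.+1 + a k) -> (forall k, b k.+2 = b k.+1 + b k) ->
  a 0%N <= b 0%N -> a 1%N <= b 1%N -> forall k, a k <= b k.
Proof.
move=> aSS bSS ab0 ab1.
suff ab k : a k <= b k /\ a k.+1 <= b k.+1 by move=> k; case: (ab k).
by elim: k => [|k [abk abk1]]; split=> //; rewrite aSS bSS; lra.
Qed.

Lemma Phi_mul_fib_le k : Phi * INR (fib k) <= Phi ^ k.
Proof.
apply: (fibonacci_like_Rle (fun k => Phi * INR (fib k)) (pow Phi)) => [j|j||].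
- by rewrite INR_fibSS; ring.
- exact: Phi_pow_SS.
- by rewrite /=; lra.
- by rewrite /=; lra.
Qed.

Lemma Phi_pow_le_fib k : Phi ^ k <= Phi * INR (fib k.+1).
Proof.
apply: (fibonacci_like_Rle (pow Phi) (fun k => Phi * INR (fib k.+1))) => [j|j||].
- exact: Phi_pow_SS.
- by rewrite INR_fibSS; ring.
- by have := Phi_gt1; rewrite /=; lra.
- by rewrite /=; lra.
Qed.

Lemma G_ge_Phi_pow c d j : (INR c * Phi + INR d) * Phi ^ j <= Phi * INR (G c d j.+2).
Proof.
have := Phi_pow_le_fib j.+1; have := Phi_pow_le_fib j.
have := pos_INR c; have := pos_INR d.
have -> : G c d j.+2 = (c * fib j.+2 + d * fib j.+1)%coq_nat by [].
rewrite plus_INR !mult_INR -tech_pow_Rmult; nra.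
Qed.

Lemma pow_exp_ln x k : 0 < x -> x ^ k = exp (INR k * ln x).
Proof. by move=> x_gt0; rewrite -Rpower_pow. Qed.

Lemma exp_arith_sumS a b k :
  exp (INR k.+1 * a + b * (INR k.+1 * (INR k.+1 - 1) / 2))
  = exp (INR k * a + b * (INR k * (INR k - 1) / 2)) * exp (a + b * INR k).
Proof. by rewrite -exp_plus S_INR; congr exp; field. Qed.

Lemma exp_arith_sum_le_prod (x : nat -> nat) a b k :
  (forall i, (i < k)%N -> exp (a + b * INR i) <= INR (x i)) ->
  exp (INR k * a + b * (INR k * (INR k - 1) / 2)) <= INR (\prod_(i < k) x i).
Proof.
elim: k => [|k IH] x_ge.
  rewrite (_ : INR 0 * a + _ = 0) ?big_ord0 ?exp_0 /=; [lra | field].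
rewrite big_ord_recr mult_INR exp_arith_sumS.
apply: Rmult_le_compat; try exact: Rlt_le (exp_pos _); last exact: x_ge.
by apply: IH => i ik; apply: x_ge; rewrite ltnS ltnW.
Qed.

Lemma prod_le_exp_arith_sum (x : nat -> nat) a b k :
  (forall i, (i < k)%N -> INR (x i) <= exp (a + b * INR i)) ->
  INR (\prod_(i < k) x i) <= exp (INR k * a + b * (INR k * (INR k - 1) / 2)).
Proof.
elim: k => [|k IH] x_le.
  rewrite (_ : INR 0 * a + _ = 0) ?big_ord0 ?exp_0 /=; [lra | field].
rewrite big_ord_recr mult_INR exp_arith_sumS.
apply: Rmult_le_compat; try exact: pos_INR; last exact: x_le.
by apply: IH => i ik; apply: x_le; rewrite ltnS ltnW.
Qed.

Lemma prod_G_ge_exp c d j N : 0 < INR c * Phi + INR d ->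
  exp (INR N.+1 * (ln (INR c * Phi + INR d) + (INR j - 1) * ln Phi)
       + ln Phi * (INR N.+1 * (INR N.+1 - 1) / 2))
  <= INR (\prod_(i < N.+1) G c d (j.+2 + i)).
Proof.
move=> X_gt0; have Phi_gt0 : 0 < Phi by have := Phi_gt1; lra.
apply: (exp_arith_sum_le_prod (fun i => G c d (j.+2 + i))) => i _.
rewrite (_ : _ + _ * INR i = ln (INR c * Phi + INR d) + INR (j + i) * ln Phi - ln Phi);
  last by rewrite plus_INR; ring.
rewrite /Rminus !exp_plus exp_Ropp !exp_ln // -pow_exp_ln //.
apply: (Rmult_le_reg_l Phi) => //; rewrite addSn addSn.
rewrite (_ : Phi * _ = (INR c * Phi + INR d) * Phi ^ (j + i)); first exact: G_ge_Phi_pow.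
by field; lra.
Qed.

Lemma prod_mul_fib_le_exp g N : 0 < INR g ->
  INR (\prod_(s < N) (g * fib s.+1))
  <= exp (INR N * ln (INR g) + ln Phi * (INR N * (INR N - 1) / 2)).
Proof.
move=> g_gt0; have Phi_gt1 := Phi_gt1.
apply: (prod_le_exp_arith_sum (fun s => g * fib s.+1)%N) => s _.
rewrite mult_INR exp_plus exp_ln // [ln Phi * _]Rmult_comm -pow_exp_ln; last lra.
apply: Rmult_le_compat_l; first lra.
by have := Phi_mul_fib_le s.+1; rewrite /=; nra.
Qed.

Lemma exp_sub_le x y a b : exp a <= x * y -> y <= exp b -> 0 <= x -> exp (a - b) <= x.
Proof.
move=> a_le y_le x_ge0; rewrite /Rminus exp_plus exp_Ropp.
apply: (Rmult_le_reg_r (exp b)); first exact: exp_pos.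
rewrite Rmult_assoc Rinv_l ?Rmult_1_r; last exact: Rgt_not_eq (exp_pos b).
by apply: Rle_trans a_le _; apply: Rmult_le_compat_l.
Qed.

Lemma exp_le_exp x y : x <= y -> exp x <= exp y.
Proof. by move=> xy; apply: Rnot_lt_le => /exp_lt_inv; lra. Qed.

Lemma ln_le_ln x y : 0 < x -> x <= y -> ln x <= ln y.
Proof. by move=> x_gt0 xy; apply: Rnot_lt_le => /ln_lt_inv; lra. Qed.

Lemma ln_div_mul x y z : 0 < x -> 0 < y -> 0 < z -> ln (x / (y * z)) = ln x - ln y - ln z.
Proof.
move=> x_gt0 y_gt0 z_gt0; have yz_gt0 : 0 < y * z by apply: Rmult_lt_0_compat.
rewrite /Rdiv ln_mult ?ln_Rinv ?ln_mult //; first ring.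
exact: Rinv_0_lt_compat.
Qed.

Lemma exponent_le n j x y l :
  0 <= j -> 2 * j + 1 <= n <= 2 * j + 2 -> y <= x -> 0 <= l ->
  y + (n - 1) / 2 * (x - l - y) + (n ^ 2 / 4 - n / 2 - 7 / 4) * l
  <= (n - j - 1) * x - (n - j - 2) * y + ((n - j - 1) * j - 1) * l.
Proof.
move=> j_ge0 [n_lo n_hi] yx l_ge0.
have x_coef : 0 <= (n - 1) / 2 - j by lra.
have l_coef : 0 <= (n - j - 1) * j + n - n ^ 2 / 4 + 1 / 4.
  by have := Rmult_le_pos (n - 2 * j - 1) (2 * j + 2 - n); nra.
have := Rmult_le_pos _ (x - y) x_coef; have := Rmult_le_pos _ _ l_coef l_ge0; nra.
Qed.

Lemma INR_gcd_gt0 c d : (0 < c)%coq_nat -> 0 < INR (Nat.gcd c d).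
Proof. by move=> /ltP c_gt0; apply/lt_0_INR/ltP; rewrite Nat_gcdE gcdn_gt0 c_gt0. Qed.

Lemma INR_gcd_le c d : (0 < c)%coq_nat -> INR (Nat.gcd c d) <= INR c * Phi + INR d.
Proof.
move=> /ltP c_gt0; have := le_INR _ _ (elimT leP (dvdn_leq c_gt0 (dvdn_gcdl c d))).
by rewrite -Nat_gcdE; have := Phi_gt1; have := pos_INR c; have := pos_INR d; nra.
Qed.

Lemma lcm_range_ge_exp c d m j n :
  (0 < c)%coq_nat -> (0 < m)%coq_nat -> (m <= j.+2)%coq_nat -> (j.+2 <= n)%coq_nat ->
  exp ((INR n - INR j - 1) * ln (INR c * Phi + INR d)
       - (INR n - INR j - 2) * ln (INR (Nat.gcd c d))
       + ((INR n - INR j - 1) * INR j - 1) * ln Phi)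
  <= INR (lcm_range c d m n).
Proof.
move=> c_gt0 /ltP m_gt0 /leP mj /leP jn.
have [N ->] : exists N, n = (j.+2 + N)%N by exists (n - j.+2)%N; lia.
have g_gt0 := INR_gcd_gt0 c d c_gt0.
have X_gt0 : 0 < INR c * Phi + INR d by have := INR_gcd_le c d c_gt0; lra.
have prodG_le := le_INR _ _
  (elimT leP (prod_G_le_lcm_range c d m j.+2 N (introT ltP c_gt0) m_gt0 mj)).
rewrite mult_INR in prodG_le.
apply: Rle_trans (exp_sub_le _ _ _ _ (Rle_trans _ _ _ (prod_G_ge_exp c d j N X_gt0) prodG_le)
                    (prod_mul_fib_le_exp _ N g_gt0) (pos_INR _)).
by apply: Req_le; congr exp; rewrite plus_INR !S_INR; field.
Qed.

End LcmBound.

Theorem corollary1 (c d n m : nat) :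
  (0 < c)%nat -> (0 < d)%nat -> (2 <= n)%nat -> (1 <= m)%nat ->
  (m <= (n + 1) / 2 + 1)%nat ->
  INR (lcm_range c d m n) >=
    INR (Nat.gcd c d)
    * Rpower ((INR c * Phi + INR d) / (Phi * INR (Nat.gcd c d))) ((INR n - 1) / 2)
    * Rpower Phi (INR n ^ 2 / 4 - INR n / 2 - 7 / 4).
Proof.
move=> c_gt0 _ n_ge2 m_gt0 m_le.
(* G_(j+2) is the largest first term allowed by the bound on m. *)
set j := ((n - 1) / 2)%nat.
have [j_lo j_hi] : (2 * j + 1 <= n /\ n <= 2 * j + 2)%nat.
  by have := Nat.div_mod_eq (n - 1) 2; have := Nat.mod_upper_bound (n - 1) 2; lia.
have m_le_j : (m <= S (S j))%nat.
  by have := Nat.div_mod_eq (n + 1) 2; have := Nat.mod_upper_bound (n + 1) 2; lia.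
apply: Rle_ge; apply: Rle_trans (LcmBound.lcm_range_ge_exp c d m j n c_gt0 m_gt0 _ _); try lia.
have g_gt0 := LcmBound.INR_gcd_gt0 c d c_gt0; have g_le := LcmBound.INR_gcd_le c d c_gt0.
have Phi_gt1 := LcmBound.Phi_gt1.
rewrite /Rpower -[X in X * _ * _](exp_ln _ g_gt0) -!exp_plus LcmBound.ln_div_mul; try lra.
apply/LcmBound.exp_le_exp/LcmBound.exponent_le.
- exact: pos_INR.
- by move: j_lo j_hi => /le_INR + /le_INR; rewrite !plus_INR /=; lra.
- exact: LcmBound.ln_le_ln.
- by rewrite -ln_1; apply/Rlt_le/ln_increasing; lra.
Qed.
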